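(* Let $X$ be a topological space and $k$ a complete non-Archimedean valued field. Then $\mathrm{BSC}_k(X)$, together with the evaluation map $\iota_k:X\to\mathrm{BSC}_k(X)$, $\iota_k(x)=(f\mapsto|f(x)|)$, is a universal totally disconnected Hausdorff compactification of $X$: $\mathrm{BSC}_k(X)$ is a totally disconnected compact Hausdorff space, $\iota_k(X)$ is dense, and for every totally disconnected compact Hausdorff space $Y$ and continuous map $f:X\to Y$ there is a unique continuous map $g:\mathrm{BSC}_k(X)\to Y$ with $f=g\circ\iota_k$. In particular, up to homeomorphism compatible with the evaluation maps, $\mathrm{BSC}_k(X)$ does not depend on $k$.
   Context: $k$ is a field complete with respect to a non-Archimedean absolute value of rank one (possibly trivial). $C_{bd}(X,k)$ is the $k$-algebra of bounded continuous functions $X\to k$ with the supremum norm. $\mathrm{BSC}_k(X)$ is the Berkovich spectrum $\mathcal M_k(C_{bd}(X,k))$: the set of multiplicative seminorms $f\mapsto|f|_x$ on $C_{bd}(X,k)$ extending the absolute value of $k$ and bounded by the supremum norm, with the weakest topology making all $x\mapsto|f|_x$ continuous. *)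

From Stdlib Require Import Reals Lra List.
From mathcomp Require Import ssreflect ssrfun ssrbool eqtype ssralg.
Local Open Scope R_scope.

Definition t_is_topology {X : Type} (O : (X -> Prop) -> Prop) : Prop :=
  O (fun _ => True) /\
  (forall U V, O U -> O V -> O (fun x => U x /\ V x)) /\
  (forall F : (X -> Prop) -> Prop, (forall U, F U -> O U) ->
      O (fun x => exists U, F U /\ U x)).

Definition t_continuous {X Y : Type} (OX : (X -> Prop) -> Prop)
  (OY : (Y -> Prop) -> Prop) (f : X -> Y) : Prop :=
  forall V, OY V -> OX (fun x => V (f x)).

Definition t_compact {X : Type} (O : (X -> Prop) -> Prop) : Prop :=
  forall F : (X -> Prop) -> Prop,
    (forall U, F U -> O U) -> (forall x, exists U, F U /\ U x) ->
    exists l : list (X -> Prop),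
      (forall U, In U l -> F U) /\ (forall x, exists U, In U l /\ U x).

Definition t_hausdorff {X : Type} (O : (X -> Prop) -> Prop) : Prop :=
  forall x y : X, x <> y ->
    exists U V, O U /\ O V /\ U x /\ V y /\ (forall z, ~ (U z /\ V z)).

Definition t_connected_subset {X : Type} (O : (X -> Prop) -> Prop)
  (S : X -> Prop) : Prop :=
  ~ exists U V, O U /\ O V /\ (forall x, S x -> U x \/ V x) /\
      (exists x, S x /\ U x) /\ (exists x, S x /\ V x) /\
      (forall x, S x -> U x -> V x -> False).

Definition t_totally_disconnected {X : Type} (O : (X -> Prop) -> Prop) : Prop :=
  forall S, t_connected_subset O S -> forall x y, S x -> S y -> x = y.

Definition t_dense {X : Type} (O : (X -> Prop) -> Prop) (D : X -> Prop) : Prop :=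
  forall U, O U -> (exists y, U y) -> exists y, U y /\ D y.

Definition t_homeomorphism {X Y : Type} (OX : (X -> Prop) -> Prop)
  (OY : (Y -> Prop) -> Prop) (h : X -> Y) : Prop :=
  exists h' : Y -> X, t_continuous OX OY h /\ t_continuous OY OX h' /\
    (forall x, h' (h x) = x) /\ (forall y, h (h' y) = y).

Definition generated_topology {X : Type} (S : (X -> Prop) -> Prop)
  (U : X -> Prop) : Prop :=
  forall O : (X -> Prop) -> Prop, t_is_topology O -> (forall V, S V -> O V) -> O U.

Definition nonarch_abs {k : fieldType} (a : k -> R) : Prop :=
  (forall x, 0 <= a x) /\
  (forall x, a x = 0 <-> x = GRing.zero) /\
  (forall x y, a (GRing.mul x y) = a x * a y) /\
  (forall x y, a (GRing.add x y) <= Rmax (a x) (a y)).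

Definition kdist {k : fieldType} (a : k -> R) (x y : k) : R :=
  a (GRing.add x (GRing.opp y)).

Definition complete_abs {k : fieldType} (a : k -> R) : Prop :=
  forall u : nat -> k,
    (forall eps, 0 < eps -> exists N, forall m n, (N <= m)%nat -> (N <= n)%nat ->
        kdist a (u m) (u n) < eps) ->
    exists l : k, forall eps, 0 < eps -> exists N, forall n, (N <= n)%nat ->
        kdist a (u n) l < eps.

Definition complete_nonarch_field {k : fieldType} (a : k -> R) : Prop :=
  nonarch_abs a /\ complete_abs a.

Definition k_open {k : fieldType} (a : k -> R) (U : k -> Prop) : Prop :=
  forall x, U x -> exists eps, 0 < eps /\ (forall y, kdist a y x < eps -> U y).

Definition bounded_continuous {X : Type} (OX : (X -> Prop) -> Prop)
  {k : fieldType} (a : k -> R) (f : X -> k) : Prop :=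
  t_continuous OX (k_open a) f /\ exists C, forall x, a (f x) <= C.

Definition Cbd {X : Type} (OX : (X -> Prop) -> Prop) {k : fieldType}
  (a : k -> R) : Type := { f : X -> k | bounded_continuous OX a f }.

(* Multiplicative seminorms on C_bd(X,k) extending |.| of k and bounded by the
   supremum norm (the sup-norm bound is written as: nu f <= C for every bound
   C of |f| on X, i.e. nu f <= sup_x |f x|). *)
Definition bounded_mult_seminorm {X : Type} (OX : (X -> Prop) -> Prop)
  {k : fieldType} (a : k -> R) (nu : Cbd OX a -> R) : Prop :=
  (forall f, 0 <= nu f) /\
  (forall f g h : Cbd OX a,
      (forall x, proj1_sig h x = GRing.add (proj1_sig f x) (proj1_sig g x)) ->
      nu h <= nu f + nu g) /\
  (forall f g h : Cbd OX a,
      (forall x, proj1_sig h x = GRing.mul (proj1_sig f x) (proj1_sig g x)) ->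
      nu h = nu f * nu g) /\
  (forall (c : k) (h : Cbd OX a), (forall x, proj1_sig h x = c) -> nu h = a c) /\
  (forall (h : Cbd OX a) C, (forall x, a (proj1_sig h x) <= C) -> nu h <= C).

Definition BSC {X : Type} (OX : (X -> Prop) -> Prop) {k : fieldType}
  (a : k -> R) : Type :=
  { nu : Cbd OX a -> R | bounded_mult_seminorm OX a nu }.

Definition BSC_open {X : Type} (OX : (X -> Prop) -> Prop) {k : fieldType}
  (a : k -> R) : (BSC OX a -> Prop) -> Prop :=
  generated_topology (fun V : BSC OX a -> Prop =>
    exists (f : Cbd OX a) (W : R -> Prop), Rtopology.open_set W /\
      forall p, V p <-> W (proj1_sig p f)).

Lemma eval_seminorm {X : Type} (OX : (X -> Prop) -> Prop) {k : fieldType}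
  (a : k -> R) (Ha : nonarch_abs a) (x : X) :
  bounded_mult_seminorm OX a (fun f => a (proj1_sig f x)).
Proof.
  destruct Ha as [H0 [_ [Hm Hu]]].
  split; [intro f; apply H0|].
  split; [intros f g h E; rewrite E;
          specialize (Hu (proj1_sig f x) (proj1_sig g x));
          pose proof (H0 (proj1_sig f x)); pose proof (H0 (proj1_sig g x));
          unfold Rmax in Hu; destruct Rle_dec in Hu; lra|].
  split; [intros f g h E; rewrite E; apply Hm|].
  split; [intros c h E; rewrite E; reflexivity|].
  intros h C HC; apply HC.
Qed.

Definition iota {X : Type} (OX : (X -> Prop) -> Prop) {k : fieldType}
  (a : k -> R) (Ha : nonarch_abs a) (x : X) : BSC OX a :=
  exist _ (fun f => a (proj1_sig f x)) (eval_seminorm OX a Ha x).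

(* The key objects are the indicator functions 1_D of clopen sets D of X:
   they are idempotents of C_bd(X,k), so every point p of BSC_k(X) takes the
   value 0 or 1 on them.  Because k is non-Archimedean, the sets
   {x | |h x| < s} and {x | s < |h x|} (s > 0) are clopen for every h.
   Comparing p and q on such indicators separates two distinct points by a
   clopen subset of BSC_k(X), which gives Hausdorffness and total
   disconnectedness; intersecting such sets puts a point iota x in every
   basic neighbourhood, which gives density.  Compactness comes from ultrafilters: the limit of the
   values q h along an ultrafilter of points q is again a bounded
   multiplicative seminorm.  For the universal property, a point p selects
   the clopen sets of Y whose preimage under f it charges; in a compact
   Hausdorff totally disconnected Y their intersection is one point g p.
   Independence of k is the uniqueness of universal objects. *)

From Stdlib Require Import Reals List Lra.
From Stdlib Require Import Classical ClassicalEpsilon FunctionalExtensionality.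
From Stdlib Require Import PropExtensionality ProofIrrelevance.
From mathcomp Require Import ssreflect ssrfun ssrbool eqtype ssralg.
From mathcomp Require filter.
Local Open Scope R_scope.
Set Implicit Arguments.
Unset Strict Implicit.

Lemma pred_ext (T : Type) (U V : T -> Prop) : (forall x, U x <-> V x) -> U = V.
Proof. move=> H; apply: functional_extensionality => x; exact: propositional_extensionality. Qed.

Definition clopen (T : Type) (O : (T -> Prop) -> Prop) (D : T -> Prop) : Prop :=
  O D /\ O (fun x => ~ D x).

Lemma clopenC (T : Type) (O : (T -> Prop) -> Prop) D :
  clopen O D -> clopen O (fun x => ~ D x).
Proof.
case=> h1 h2; split => //; suff -> : (fun x => ~ ~ D x) = D by [].
by apply: pred_ext => x; split; [exact: NNPP|tauto].
Qed.

Section AbsoluteValue.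
Variables (k : fieldType) (a : k -> R) (Ha : nonarch_abs a).

Lemma abs_ge0 x : 0 <= a x.
Proof. exact: (proj1 Ha x). Qed.

Lemma abs_eq0 x : a x = 0 <-> x = GRing.zero.
Proof. exact: (proj1 (proj2 Ha) x). Qed.

Lemma abs_mul x y : a (GRing.mul x y) = a x * a y.
Proof. exact: (proj1 (proj2 (proj2 Ha)) x y). Qed.

Lemma abs_ultra x y : a (GRing.add x y) <= Rmax (a x) (a y).
Proof. exact: (proj2 (proj2 (proj2 Ha)) x y). Qed.

Lemma abs0 : a GRing.zero = 0.
Proof. by apply/abs_eq0. Qed.

Lemma abs_neq0 x : 0 < a x -> x <> GRing.zero.
Proof. by move=> hx /abs_eq0 h; lra. Qed.

Lemma abs1 : a (GRing.one k) = 1.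
Proof.
have h := abs_mul (GRing.one k) (GRing.one k); rewrite GRing.mulr1 in h.
have nz : a (GRing.one k) <> 0.
  by move=> /abs_eq0 h1; have := @GRing.oner_neq0 k; rewrite h1 eqxx.
have := abs_ge0 (GRing.one k); nra.
Qed.

Lemma absN x : a (GRing.opp x) = a x.
Proof.
have h := abs_mul (GRing.opp (GRing.one k)) (GRing.opp (GRing.one k)).
rewrite GRing.mulrNN GRing.mulr1 abs1 in h.
have hN1 : a (GRing.opp (GRing.one k)) = 1 by have := abs_ge0 (GRing.opp (GRing.one k)); nra.
by rewrite -GRing.mulN1r abs_mul hN1 Rmult_1_l.
Qed.

Lemma kdist_sym z y : kdist a z y = kdist a y z.
Proof. by rewrite /kdist -absN GRing.opprB. Qed.

Lemma abs_le_max_dist z y : a z <= Rmax (a y) (kdist a z y).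
Proof. by have := abs_ultra y (GRing.add z (GRing.opp y)); rewrite GRing.addrC GRing.subrK. Qed.

Lemma abs_lipschitz z y : Rabs (a z - a y) <= kdist a z y.
Proof.
have h1 := abs_le_max_dist z y; have h2 := abs_le_max_dist y z.
rewrite kdist_sym in h2; have h0 := abs_ge0 (GRing.add z (GRing.opp y)).
have hy := abs_ge0 y; have hz := abs_ge0 z.
rewrite /kdist /Rmax in h1 h2 *; apply: Rabs_le.
by destruct Rle_dec in h1; destruct Rle_dec in h2; split; lra.
Qed.

Lemma abs_isosceles z y : kdist a z y < a y -> a z = a y.
Proof.
move=> H; have h1 := abs_le_max_dist z y; have h2 := abs_le_max_dist y z.
rewrite kdist_sym in h2; rewrite /Rmax in h1 h2.
by destruct Rle_dec in h1; destruct Rle_dec in h2; lra.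
Qed.

Lemma abs_inv x : x <> GRing.zero -> a (GRing.inv x) = / a x.
Proof.
move=> nz; have ax : a x <> 0 by move=> /abs_eq0.
have h : GRing.mul (GRing.inv x) x = GRing.one k by apply: GRing.mulVf; apply/eqP.
have := abs_mul (GRing.inv x) x; rewrite h abs1 => h'.
by apply: (Rmult_eq_reg_r (a x)) => //; rewrite -h' Rinv_l.
Qed.

Lemma kdist_inv z y : z <> GRing.zero -> y <> GRing.zero ->
  kdist a (GRing.inv z) (GRing.inv y) = kdist a z y * (/ a z * / a y).
Proof.
move=> hz hy.
have e : GRing.add (GRing.inv z) (GRing.opp (GRing.inv y)) =
  GRing.mul (GRing.add y (GRing.opp z)) (GRing.mul (GRing.inv z) (GRing.inv y)).
  have hz' : z != GRing.zero by apply/eqP.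
  have hy' : y != GRing.zero by apply/eqP.
  rewrite GRing.mulrBl GRing.mulrCA GRing.mulfV // GRing.mulr1.
  by rewrite GRing.mulrA GRing.mulfV // GRing.mul1r.
by rewrite /kdist e !abs_mul abs_inv // abs_inv // -/(kdist a y z) kdist_sym.
Qed.

End AbsoluteValue.

Section KTopology.
Variables (k : fieldType) (a : k -> R) (Ha : nonarch_abs a).

Lemma k_open_const (P : Prop) : k_open a (fun _ => P).
Proof. by move=> y hy; exists 1; split => //; lra. Qed.

Lemma k_open_abs_preimage (W : R -> Prop) :
  Rtopology.open_set W -> k_open a (fun y => W (a y)).
Proof.
move=> HW y Wy; have [e He] := HW _ Wy.
exists e; split; first exact: cond_pos.
by move=> z hz; apply: He; red; have := abs_lipschitz Ha z y; lra.
Qed.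

Lemma k_clopen_lt s : 0 < s -> clopen (k_open a) (fun y => a y < s).
Proof.
move=> hs; split=> y hy.
- exists s; split => // z hz.
  by have := abs_le_max_dist Ha z y; rewrite /Rmax; case: Rle_dec; lra.
- exists (a y); split; first lra.
  by move=> z hz; rewrite (abs_isosceles Ha hz).
Qed.

(* Likewise {s < |y|} is clopen for s <> 0 (it is all of k when s < 0). *)
Lemma k_clopen_gt s : s < 0 \/ 0 < s -> clopen (k_open a) (fun y => s < a y).
Proof.
case=> hs.
- have -> : (fun y => s < a y) = (fun _ => True).
    by apply: pred_ext => y; have h := abs_ge0 Ha y; split => // _; lra.
  split; exact: k_open_const.
- split => y hy.
  + exists (a y); split; first lra.
    by move=> z hz; rewrite (abs_isosceles Ha hz).
  + exists s; split => // z hz.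
    by have := abs_le_max_dist Ha z y; rewrite /Rmax; case: Rle_dec; lra.
Qed.

Lemma k_open_inv s (U : k -> Prop) : 0 < s -> k_open a U ->
  k_open a (fun y => s <= a y /\ U (GRing.inv y)).
Proof.
move=> hs HU y [hy Uy]; have [e [he He]] := HU _ Uy.
have hess : 0 < e * s * s by do 2 apply: Rmult_lt_0_compat => //.
exists (Rmin s (e * s * s)); split; first exact: Rmin_pos.
move=> z hz.
have hzs : kdist a z y < s by have := Rmin_l s (e * s * s); lra.
have hze : kdist a z y < e * s * s by have := Rmin_r s (e * s * s); lra.
have eqz : a z = a y by apply: (abs_isosceles Ha); lra.
split; first lra.
apply: He; rewrite (kdist_inv Ha) ?eqz; try (apply: (abs_neq0 Ha); lra).
have hd : 0 <= kdist a z y := abs_ge0 Ha _.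
have hinv : / a y <= / s by apply: Rinv_le_contravar.
have hpos : 0 < / a y by apply: Rinv_0_lt_compat; lra.
have hvs : 0 < / s by apply: Rinv_0_lt_compat.
have h1 : kdist a z y * (/ a y * / a y) <= kdist a z y * (/ s * / s).
  by apply: Rmult_le_compat_l => //; apply: Rmult_le_compat; lra.
have h2 : kdist a z y * (/ s * / s) < e * s * s * (/ s * / s).
  by apply: Rmult_lt_compat_r => //; apply: Rmult_lt_0_compat.
have h3 : e * s * s * (/ s * / s) = e.
  have hss : / s * s = 1 by apply: Rinv_l; lra.
  by replace (e * s * s * (/ s * / s)) with (e * (/ s * s) * (/ s * s)) by ring; rewrite hss; ring.
lra.
Qed.

End KTopology.

Section Topology.
Variables (T : Type) (O : (T -> Prop) -> Prop) (HO : t_is_topology O).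

Lemma open_ext U V : O U -> (forall x, U x <-> V x) -> O V.
Proof. by move=> HU /pred_ext <-. Qed.

Lemma open_T : O (fun _ => True).
Proof. exact: (proj1 HO). Qed.

Lemma open_and U V : O U -> O V -> O (fun x => U x /\ V x).
Proof. exact: (proj1 (proj2 HO)). Qed.

Lemma open_union (F : (T -> Prop) -> Prop) : (forall U, F U -> O U) ->
  O (fun x => exists U, F U /\ U x).
Proof. exact: (proj2 (proj2 HO)). Qed.

Lemma open_empty : O (fun _ => False).
Proof.
apply: (open_ext (open_union (F := fun _ => False) _)) => // x.
by split; [case=> ? []|].
Qed.

Lemma open_or U V : O U -> O V -> O (fun x => U x \/ V x).
Proof.
move=> HU HV; apply: (open_ext (open_union (F := fun W => W = U \/ W = V) _)).
  by move=> W [->|->].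
move=> x; split; first by case=> W [[->|->] h]; [left|right].
by case=> h; [exists U | exists V]; split => //; [left|right].
Qed.

Lemma open_const (P : Prop) : O (fun _ => P).
Proof.
case: (classic P) => h; [apply: (open_ext open_T)|apply: (open_ext open_empty)]; tauto.
Qed.

Lemma open_local U : (forall x, U x -> exists N, O N /\ N x /\ forall y, N y -> U y) -> O U.
Proof.
move=> H; apply: (open_ext (open_union (F := fun N => O N /\ forall y, N y -> U y) _)).
  by move=> N [].
move=> x; split; first by case=> N [[_ HN] Nx]; apply: HN.
by move=> Ux; have [N [ON [Nx HN]]] := H x Ux; exists N.
Qed.

Hypothesis Hc : t_compact O.

Lemma compact_closed_family (C : (T -> Prop) -> Prop) (W : T -> Prop) :
  (forall V, C V -> O (fun x => ~ V x)) -> C (fun _ => True) ->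
  (forall V V', C V -> C V' -> C (fun x => V x /\ V' x)) ->
  O W -> (forall x, (forall V, C V -> V x) -> W x) ->
  exists V, C V /\ forall x, V x -> W x.
Proof.
move=> Copen CT CI OW HW.
pose cover U := U = W \/ exists V, C V /\ U = (fun x => ~ V x).
have [l [Hl Hcov]] : exists l : list (T -> Prop),
    (forall U, In U l -> cover U) /\ (forall x, exists U, In U l /\ U x).
  apply: Hc; first by move=> U [->|[V [CV ->]]]; [|apply: Copen].
  move=> x; case: (classic (W x)) => Wx; first by exists W; split => //; left.
  have [V [CV nVx]] : exists V, C V /\ ~ V x.
    apply: NNPP => H; apply: Wx; apply: HW => V CV.
    by apply: NNPP => nVx; apply: H; exists V.
  by exists (fun x => ~ V x); split => //; right; exists V.
have finite_step : forall l : list (T -> Prop), (forall U, In U l -> cover U) ->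
    exists V, C V /\ forall x, V x -> forall U, In U l -> U x -> W x.
  elim=> [|U l' IH] Hl'; first by exists (fun _ => True).
  have [V [CV HV]] := IH (fun U' h => Hl' U' (or_intror h)).
  case: (Hl' U (or_introl erefl)) => [->|[V' [CV' ->]]].
  - by exists V; split => // x Vx U' [<-|]; [|exact: HV].
  - exists (fun x => V x /\ V' x); split; first exact: CI.
    by move=> x [Vx V'x] U' [<- /(_ V'x)|] //; exact: HV.
have [V [CV HV]] := finite_step l Hl.
exists V; split => // x Vx; have [U [iU Ux]] := Hcov x; exact: HV x Vx U iU Ux.
Qed.

Lemma compact_separation (A B : T -> Prop) : O (fun x => ~ A x) ->
  (forall x, A x -> exists U V, O U /\ O V /\ U x /\ (forall y, B y -> V y) /\
                                (forall z, ~ (U z /\ V z))) ->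
  exists U V, O U /\ O V /\ (forall x, A x -> U x) /\ (forall y, B y -> V y) /\
              (forall z, ~ (U z /\ V z)).
Proof.
move=> OA HA.
pose C F := exists U V, O U /\ O V /\ (forall z, F z <-> ~ U z) /\
              (forall y, B y -> V y) /\ (forall z, ~ (U z /\ V z)).
have [F [[U [V [OU [OV [FU [BV D]]]]]] FA]] : exists F, C F /\ forall x, F x -> ~ A x.
  apply: compact_closed_family => //.
  - move=> F [U [V [OU [_ [FU _]]]]]; apply: (open_ext OU) => z.
    by rewrite FU; split; [tauto|exact: NNPP].
  - exists (fun _ => False), (fun _ => True); split; first exact: open_empty.
    by split; first exact: open_T; split; [tauto|split => // z []].
  - move=> F F' [U [V [OU [OV [FU [BV D]]]]]] [U' [V' [OU' [OV' [FU' [BV' D']]]]]].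
    exists (fun z => U z \/ U' z), (fun z => V z /\ V' z).
    split; first exact: open_or. split; first exact: open_and.
    split; first by move=> z; rewrite FU FU'; tauto.
    split; first by move=> y By; split; [apply: BV|apply: BV'].
    by move=> z [[Uz|Uz] [Vz V'z]]; [apply: (D z)|apply: (D' z)].
  - move=> x HF Ax; have [U [V [OU [OV [Ux [BV D]]]]]] := HA x Ax.
    have CnU : C (fun z => ~ U z) by exists U, V; split => //; split => //; split.
    exact: (HF _ CnU Ux).
exists U, V; split; [done|split; [done|split; [|done]]].
by move=> x Ax; apply: NNPP => nUx; apply: (FA x) => //; rewrite FU.
Qed.

Hypothesis Hh : t_hausdorff O.

Lemma compact_hausdorff_normal (A B : T -> Prop) :
  O (fun x => ~ A x) -> O (fun x => ~ B x) -> (forall x, ~ (A x /\ B x)) ->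
  exists U V, O U /\ O V /\ (forall x, A x -> U x) /\ (forall x, B x -> V x) /\
              (forall z, ~ (U z /\ V z)).
Proof.
move=> OA OB AB; apply: compact_separation => // x Ax.
have [V [U [OV [OU [BV [xU D]]]]]] : exists V U, O V /\ O U /\
    (forall y, B y -> V y) /\ (forall y, y = x -> U y) /\ (forall z, ~ (V z /\ U z)).
  apply: compact_separation => // y By.
  have nyx : y <> x by move=> e; subst y; exact: (AB x).
  have [V [U [OV [OU [Vy [Ux D]]]]]] := Hh nyx.
  by exists V, U; split; [done|split; [done|split; [done|split; [move=> z ->|]]]].
exists U, V; split; [done|split; [done|split; [exact: xU|split; [done|]]]].
by move=> z [Uz Vz]; exact: (D z).
Qed.

End Topology.

Definition ultrafilter (T : Type) (G : (T -> Prop) -> Prop) : Prop :=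
  G (fun _ => True) /\
  (forall A B, G A -> G B -> G (fun t => A t /\ B t)) /\
  (forall A B : T -> Prop, (forall t, A t -> B t) -> G A -> G B) /\
  ~ G (fun _ => False) /\
  (forall A, G A \/ G (fun t => ~ A t)).

Lemma ultrafilter_extension (T : Type) (F : (T -> Prop) -> Prop) :
  F (fun _ => True) -> (forall A B, F A -> F B -> F (fun t => A t /\ B t)) ->
  (forall A B : T -> Prop, (forall t, A t -> B t) -> F A -> F B) ->
  ~ F (fun _ => False) ->
  exists G, ultrafilter G /\ forall A, F A -> G A.
Proof.
move=> FT FI FS F0.
have PF : filter.ProperFilter F.
  split; first exact: F0.
  by split; [exact: FT | move=> A B; exact: FI | exact: FS].
have [G [UG FG]] := filter.ultraFilterLemma PF.
exists G; split => //; split; first exact: FG.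
split; first by move=> A B; apply: filter.filterI.
split; first by move=> A B; apply: filter.filterS.
split; first exact: (@filter.filter_not_empty _ G _).
move=> A; exact: (filter.in_ultra_setVsetC A UG).
Qed.

Section UltrafilterLimits.
Variables (T : Type) (G : (T -> Prop) -> Prop) (HG : ultrafilter G).

Lemma uf_T : G (fun _ => True).
Proof. exact: (proj1 HG). Qed.

Lemma uf_and A B : G A -> G B -> G (fun t => A t /\ B t).
Proof. exact: (proj1 (proj2 HG)). Qed.

Lemma uf_mono (A B : T -> Prop) : (forall t, A t -> B t) -> G A -> G B.
Proof. exact: (proj1 (proj2 (proj2 HG))). Qed.

Lemma uf_choice A : G A \/ G (fun t => ~ A t).
Proof. exact: (proj2 (proj2 (proj2 (proj2 HG)))). Qed.

Lemma uf_nonempty A : G A -> exists t, A t.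
Proof.
move=> GA; apply: NNPP => H; apply: (proj1 (proj2 (proj2 (proj2 HG)))).
by apply: (uf_mono _ GA) => t At; apply: H; exists t.
Qed.

Definition uf_converges (phi : T -> R) (L : R) : Prop :=
  forall e, 0 < e -> G (fun t => Rabs (phi t - L) < e).

Lemma uf_converges_const c : uf_converges (fun _ => c) c.
Proof. by move=> e he; apply: (uf_mono _ uf_T) => t _; rewrite Rminus_diag Rabs_R0. Qed.

(* Bounded real functions converge along an ultrafilter: the limit is the
   supremum of the r such that {r <= phi} belongs to G. *)
Lemma uf_limit_exists (phi : T -> R) : (exists M, forall t, 0 <= phi t <= M) ->
  exists L, uf_converges phi L.
Proof.
move=> [M HM]; pose E r := G (fun t => r <= phi t).
have E0 : E 0 by apply: (uf_mono _ uf_T) => t _; have := HM t; lra.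
have Eb : bound E.
  exists M => r Er; apply: Rnot_lt_le => hr; apply: (proj1 (proj2 (proj2 (proj2 HG)))).
  by apply: (uf_mono _ Er) => t ht; have := HM t; lra.
have [L [HL1 HL2]] := completeness E Eb (ex_intro _ 0 E0).
exists L => e he.
have [r [Er hr]] : exists r, E r /\ L - e < r.
  apply: NNPP => H; have : L <= L - e; last lra.
  by apply: HL2 => r Er; apply: Rnot_lt_le => hr; apply: H; exists r.
have nE : ~ E (L + e / 2) by move=> h; have := HL1 _ h; lra.
have G2 : G (fun t => ~ (L + e / 2 <= phi t)) by case: (uf_choice (fun t => L + e / 2 <= phi t)).
by apply: (uf_mono _ (uf_and Er G2)) => t [h1 h2]; apply: Rabs_def1; lra.
Qed.

Lemma uf_limit_le (phi psi : T -> R) L M : uf_converges phi L -> uf_converges psi M ->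
  (forall t, phi t <= psi t) -> L <= M.
Proof.
move=> HL HM Hle; apply: Rnot_lt_le => hlt.
have he : 0 < (L - M) / 2 by lra.
have [t [h1 h2]] := uf_nonempty (uf_and (HL _ he) (HM _ he)).
have := Hle t; have := Rabs_def2 _ _ h1; have := Rabs_def2 _ _ h2; lra.
Qed.

Lemma uf_limit_unique (phi : T -> R) L M : uf_converges phi L -> uf_converges phi M -> L = M.
Proof.
move=> HL HM; apply: Rle_antisym; [apply: (uf_limit_le HL HM)|apply: (uf_limit_le HM HL)];
  move=> t; exact: Rle_refl.
Qed.

Lemma uf_converges_plus (phi psi : T -> R) L M : uf_converges phi L -> uf_converges psi M ->
  uf_converges (fun t => phi t + psi t) (L + M).
Proof.
move=> HL HM e he; have he2 : 0 < e / 2 by lra.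
apply: (uf_mono _ (uf_and (HL _ he2) (HM _ he2))) => t [h1 h2].
have := Rabs_def2 _ _ h1; have := Rabs_def2 _ _ h2; move=> [h3 h4] [h5 h6].
by apply: Rabs_def1; lra.
Qed.

Lemma uf_converges_mult (phi psi : T -> R) L M : uf_converges phi L -> uf_converges psi M ->
  uf_converges (fun t => phi t * psi t) (L * M).
Proof.
move=> HL HM e he.
pose c := Rabs L + Rabs M + 1.
have hc : 0 < c by have := Rabs_pos L; have := Rabs_pos M; rewrite /c; lra.
pose d := Rmin 1 (e / (2 * c)).
have hd : 0 < d by apply: Rmin_pos; [lra|apply: Rdiv_lt_0_compat; lra].
have hd1 : d <= 1 by exact: Rmin_l.
have hdc : d * (2 * c) <= e.
  have -> : e = e / (2 * c) * (2 * c) by field; lra.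
  by apply: Rmult_le_compat_r; [lra|exact: Rmin_r].
apply: (uf_mono _ (uf_and (HL _ hd) (HM _ hd))) => t [h1 h2].
have hpsi : Rabs (psi t) <= Rabs M + 1.
  have := Rabs_triang (psi t - M) M; rewrite Rplus_comm Rplus_minus; lra.
have h3 : Rabs (phi t - L) * Rabs (psi t) <= d * (Rabs M + 1).
  by apply: Rmult_le_compat; try apply: Rabs_pos; lra.
have h4 : Rabs L * Rabs (psi t - M) <= Rabs L * d.
  by apply: Rmult_le_compat_l; [apply: Rabs_pos|lra].
have -> : phi t * psi t - L * M = (phi t - L) * psi t + L * (psi t - M) by ring.
apply: (Rle_lt_trans _ _ _ (Rabs_triang _ _)); rewrite !Rabs_mult.
rewrite /c in hdc; lra.
Qed.

End UltrafilterLimits.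

Lemma clopen_and (T : Type) (O : (T -> Prop) -> Prop) (HO : t_is_topology O) D E :
  clopen O D -> clopen O E -> clopen O (fun x => D x /\ E x).
Proof.
case=> h1 h2 [h3 h4]; split; first exact: open_and.
apply: (open_ext (open_or HO h2 h4)) => x; split; first tauto.
by move=> h; case: (classic (D x)); tauto.
Qed.

Lemma clopen_const (T : Type) (O : (T -> Prop) -> Prop) (HO : t_is_topology O) (P : Prop) :
  clopen O (fun _ => P).
Proof. by split; apply: open_const. Qed.

Section IndicatorFunctions.
Variables (X : Type) (OX : (X -> Prop) -> Prop) (HX : t_is_topology OX).
Variables (k : fieldType) (a : k -> R) (Ha : nonarch_abs a).

Lemma cbd_bounded (h : Cbd OX a) : exists C, forall x, a (proj1_sig h x) <= C.
Proof. exact: (proj2 (proj2_sig h)). Qed.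

Definition piece (D : X -> Prop) (g : X -> k) (x : X) : k :=
  if excluded_middle_informative (D x) then g x else GRing.zero.

Lemma piece_in D g x : D x -> piece D g x = g x.
Proof. by rewrite /piece; case: excluded_middle_informative. Qed.

Lemma piece_out D g x : ~ D x -> piece D g x = GRing.zero.
Proof. by rewrite /piece; case: excluded_middle_informative. Qed.

Lemma piece_continuous D g : clopen OX D ->
  (forall U, k_open a U -> OX (fun x => D x /\ U (g x))) ->
  t_continuous OX (k_open a) (piece D g).
Proof.
move=> [h1 h2] H U HU.
apply: (open_ext (open_or HX (H U HU) (open_and HX h2 (open_const HX (U GRing.zero))))) => x.
by case: (classic (D x)) => Dx; [rewrite piece_in|rewrite piece_out]; tauto.
Qed.

Lemma piece_bound D g C : (forall x, D x -> a (g x) <= C) ->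
  forall x, a (piece D g x) <= Rmax C 0.
Proof.
move=> H x; case: (classic (D x)) => Dx.
- by rewrite piece_in //; have := H x Dx; have := Rmax_l C 0; lra.
- by rewrite piece_out // (abs0 Ha); exact: Rmax_r.
Qed.

Lemma const_bounded_continuous (c : k) : bounded_continuous OX a (fun _ => c).
Proof. by split; [move=> U HU; exact: open_const|exists (a c) => x; exact: Rle_refl]. Qed.

Definition cconst (c : k) : Cbd OX a := exist _ _ (const_bounded_continuous c).

Lemma mask_bounded_continuous D (HD : clopen OX D) (h : Cbd OX a) :
  bounded_continuous OX a (piece D (proj1_sig h)).
Proof.
case: h => f [cf [C HC]] /=; split.
- by apply: piece_continuous => // U HU; apply: (open_and HX); [exact: (proj1 HD)|exact: cf].
- by exists (Rmax C 0); apply: piece_bound => x _; exact: HC.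
Qed.

Definition mask D (HD : clopen OX D) (h : Cbd OX a) : Cbd OX a :=
  exist _ _ (mask_bounded_continuous HD h).

Definition ind D (HD : clopen OX D) : Cbd OX a := mask HD (cconst (GRing.one k)).

Lemma inv_bounded_continuous D (HD : clopen OX D) (h : Cbd OX a) s (hs : 0 < s)
  (Hs : forall x, D x -> s <= a (proj1_sig h x)) :
  bounded_continuous OX a (piece D (fun x => GRing.inv (proj1_sig h x))).
Proof.
case: h Hs => f [cf _] /= Hs; split.
- apply: piece_continuous => // U HU.
  apply: (open_ext (open_and HX (proj1 HD) (cf _ (k_open_inv Ha hs HU)))) => x.
  by split; [tauto|move=> [Dx Ux]; split => //; split => //; exact: Hs].
- exists (Rmax (/ s) 0); apply: piece_bound => x Dx; have hx := Hs x Dx.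
  have nz : f x <> GRing.zero by apply: (abs_neq0 Ha); lra.
  by rewrite (abs_inv Ha nz); apply: Rinv_le_contravar.
Qed.

Definition inv_on D (HD : clopen OX D) (h : Cbd OX a) s (hs : 0 < s)
  (Hs : forall x, D x -> s <= a (proj1_sig h x)) : Cbd OX a :=
  exist _ _ (inv_bounded_continuous HD hs Hs).

End IndicatorFunctions.

Section PointValues.
Variables (X : Type) (OX : (X -> Prop) -> Prop) (HX : t_is_topology OX).
Variables (k : fieldType) (a : k -> R) (Ha : nonarch_abs a).
Variable p : BSC OX a.
Local Notation nu := (proj1_sig p).
Local Notation ind := (ind HX Ha).
Local Notation cconst := (cconst HX a).

Lemma nu_ge0 h : 0 <= nu h.
Proof. exact: (proj1 (proj2_sig p)). Qed.

Lemma nu_add f g h :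
  (forall x, proj1_sig h x = GRing.add (proj1_sig f x) (proj1_sig g x)) ->
  nu h <= nu f + nu g.
Proof. exact: (proj1 (proj2 (proj2_sig p))). Qed.

Lemma nu_mul f g h :
  (forall x, proj1_sig h x = GRing.mul (proj1_sig f x) (proj1_sig g x)) ->
  nu h = nu f * nu g.
Proof. exact: (proj1 (proj2 (proj2 (proj2_sig p)))). Qed.

Lemma nu_const c h : (forall x, proj1_sig h x = c) -> nu h = a c.
Proof. exact: (proj1 (proj2 (proj2 (proj2 (proj2_sig p))))). Qed.

Lemma nu_bound h C : (forall x, a (proj1_sig h x) <= C) -> nu h <= C.
Proof. exact: (proj2 (proj2 (proj2 (proj2 (proj2_sig p))))). Qed.

(* 1_D is idempotent, so p takes the value 0 or 1 on it. *)
Lemma ind_value01 D (HD : clopen OX D) : nu (ind HD) = 0 \/ nu (ind HD) = 1.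
Proof.
have e : nu (ind HD) = nu (ind HD) * nu (ind HD).
  apply: nu_mul => x /=; case: (classic (D x)) => Dx.
  - by rewrite !piece_in // GRing.mulr1.
  - by rewrite !piece_out // GRing.mulr0.
have := nu_ge0 (ind HD); nra.
Qed.

(* 1_D + 1_{X\D} = 1 and 1_D * 1_{X\D} = 0. *)
Lemma ind_compl D (HD : clopen OX D) : nu (ind (clopenC HD)) = 1 - nu (ind HD).
Proof.
have hsum : 1 <= nu (ind HD) + nu (ind (clopenC HD)).
  rewrite -(abs1 Ha) -(nu_const (h := cconst (GRing.one k))) //.
  apply: nu_add => x /=; case: (classic (D x)) => Dx.
  - by rewrite piece_in // piece_out ?GRing.addr0.
  - by rewrite piece_out // piece_in ?GRing.add0r.
have hprod : 0 = nu (ind HD) * nu (ind (clopenC HD)).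
  rewrite -(abs0 Ha) -(nu_const (h := cconst GRing.zero)) //.
  apply: nu_mul => x /=; case: (classic (D x)) => Dx.
  - by rewrite piece_in // piece_out ?GRing.mulr0.
  - by rewrite piece_out // GRing.mul0r.
case: (ind_value01 HD) => e1; case: (ind_value01 (clopenC HD)) => e2;
  rewrite e1 e2 in hsum hprod *; lra.
Qed.

(* 1_{D /\ E} = 1_D * 1_E. *)
Lemma ind_and D E (HD : clopen OX D) (HE : clopen OX E) :
  nu (ind (clopen_and HX HD HE)) = nu (ind HD) * nu (ind HE).
Proof.
apply: nu_mul => x /=; case: (classic (D x /\ E x)) => [[Dx Ex]|nDE].
- by rewrite !piece_in // GRing.mulr1.
- rewrite piece_out //; case: (classic (D x)) => Dx.
  + by rewrite (piece_out (D := E)) ?GRing.mulr0 //; tauto.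
  + by rewrite (piece_out (D := D)) ?GRing.mul0r.
Qed.

Lemma ind_proof_irrelevance D (H1 H2 : clopen OX D) : nu (ind H1) = nu (ind H2).
Proof. by rewrite (proof_irrelevance _ H1 H2). Qed.

Lemma ind_empty D (HD : clopen OX D) : (forall x, ~ D x) -> nu (ind HD) = 0.
Proof.
move=> H; apply: Rle_antisym; last exact: nu_ge0.
by apply: nu_bound => x /=; rewrite piece_out // (abs0 Ha); exact: Rle_refl.
Qed.

Lemma ind_full D (HD : clopen OX D) : (forall x, D x) -> nu (ind HD) = 1.
Proof.
by move=> H; rewrite (nu_const (c := GRing.one k)) ?(abs1 Ha) // => x /=; rewrite piece_in.
Qed.

Lemma value_le_off_null D (HD : clopen OX D) h M : nu (ind HD) = 0 -> 0 <= M ->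
  (forall x, ~ D x -> a (proj1_sig h x) <= M) -> nu h <= M.
Proof.
move=> h0 hM HM.
have hsplit : nu h <= nu (mask HX Ha HD h) + nu (mask HX Ha (clopenC HD) h).
  apply: nu_add => x /=; case: (classic (D x)) => Dx.
  - by rewrite piece_in // piece_out ?GRing.addr0.
  - by rewrite piece_out // piece_in ?GRing.add0r.
have hin : nu (mask HX Ha HD h) = nu h * nu (ind HD).
  apply: nu_mul => x /=; case: (classic (D x)) => Dx.
  - by rewrite !piece_in // GRing.mulr1.
  - by rewrite !piece_out // GRing.mulr0.
have hout : nu (mask HX Ha (clopenC HD) h) <= M.
  apply: nu_bound => x /=; case: (classic (D x)) => Dx.
  - by rewrite piece_out ?(abs0 Ha).
  - by rewrite piece_in //; exact: HM.
rewrite hin h0 in hsplit; lra.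
Qed.

(* If p(1_D) = 1 and |h| >= s > 0 on D, then p(h) >= s: h is invertible on D. *)
Lemma value_ge_on_full D (HD : clopen OX D) h s (hs : 0 < s)
  (Hs : forall x, D x -> s <= a (proj1_sig h x)) : nu (ind HD) = 1 -> s <= nu h.
Proof.
move=> h1; set w := nu (inv_on HX Ha HD hs Hs).
have hw : 1 = nu h * w.
  rewrite -h1; apply: nu_mul => x /=; case: (classic (D x)) => Dx.
  - rewrite !piece_in //; have hx := Hs x Dx.
    have nz : proj1_sig h x != GRing.zero by apply/eqP; apply: (abs_neq0 Ha); lra.
    by rewrite GRing.mulfV.
  - by rewrite !piece_out // GRing.mulr0.
have hws : w <= / s.
  apply: nu_bound => x /=; case: (classic (D x)) => Dx.
  - rewrite piece_in //; have hx := Hs x Dx.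
    have nz : proj1_sig h x <> GRing.zero by apply: (abs_neq0 Ha); lra.
    by rewrite (abs_inv Ha nz); apply: Rinv_le_contravar.
  - by rewrite piece_out // (abs0 Ha); left; exact: Rinv_0_lt_compat.
apply: Rnot_lt_le => hlt.
have h2 : nu h * w <= nu h * / s by apply: Rmult_le_compat_l; [exact: nu_ge0|].
have h3 : nu h * / s < s * / s by apply: Rmult_lt_compat_r => //; exact: Rinv_0_lt_compat.
rewrite Rinv_r in h3; lra.
Qed.

End PointValues.

Lemma real_open_lt c : Rtopology.open_set (fun t => t < c).
Proof.
move=> t ht; exists (mkposreal (c - t) ltac:(lra)) => u hu.
by move: hu; rewrite /Rtopology.disc /=; have := Rle_abs (u - t); lra.
Qed.

Lemma real_open_gt c : Rtopology.open_set (fun t => c < t).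
Proof.
move=> t ht; exists (mkposreal (t - c) ltac:(lra)) => u hu.
by move: hu; rewrite /Rtopology.disc /= Rabs_minus_sym; have := Rle_abs (t - u); lra.
Qed.

Section BSCTopology.
Variables (X : Type) (OX : (X -> Prop) -> Prop) (k : fieldType) (a : k -> R).
Local Notation B := (BSC OX a).
Local Notation TB := (BSC_open OX a).

Lemma BSC_topology : t_is_topology TB.
Proof.
split; [|split].
- by move=> O HO _; exact: (proj1 HO).
- by move=> U V HU HV O HO HS; exact: (proj1 (proj2 HO) _ _ (HU O HO HS) (HV O HO HS)).
- by move=> F HF O HO HS; apply: (proj2 (proj2 HO)) => U FU; exact: (HF U FU O HO HS).
Qed.

Lemma BSC_open_eval h (W : R -> Prop) :
  Rtopology.open_set W -> TB (fun p : B => W (proj1_sig p h)).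
Proof. by move=> HW O HO HS; apply: HS; exists h, W. Qed.

Lemma BSC_eq (p q : B) : (forall h, proj1_sig p h = proj1_sig q h) -> p = q.
Proof.
case: p => f pf; case: q => g pg /= H.
have e : f = g by apply: functional_extensionality.
by subst; f_equal; apply: proof_irrelevance.
Qed.

Definition near (l : list (Cbd OX a * R)) (p q : B) : Prop :=
  forall he, In he l -> Rabs (proj1_sig q (fst he) - proj1_sig p (fst he)) < snd he.

Definition positive_radii (l : list (Cbd OX a * R)) : Prop :=
  forall he, In he l -> 0 < snd he.

Definition basic_open (U : B -> Prop) : Prop :=
  forall p, U p -> exists l, positive_radii l /\ forall q, near l p q -> U q.

Lemma basic_open_topology : t_is_topology basic_open.
Proof.
split; [|split].
- by move=> p _; exists nil; split => // he [].
- move=> U V HU HV p [Up Vp].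
  have [l1 [H1 K1]] := HU p Up; have [l2 [H2 K2]] := HV p Vp.
  exists (l1 ++ l2); split.
  + by move=> he hin; case: (in_app_or _ _ _ hin) => h; [exact: H1|exact: H2].
  + by move=> q Hq; split; [apply: K1|apply: K2] => he hin; apply: Hq; apply: in_or_app; tauto.
- move=> F HF p [U [FU Up]]; have [l [H K]] := HF U FU p Up.
  by exists l; split => // q Hq; exists U; split => //; exact: K.
Qed.

Lemma BSC_open_basic U : TB U -> basic_open U.
Proof.
move=> HU; apply: HU; first exact: basic_open_topology.
move=> V [h [W [HW HV]]] p /HV Wp; have [e He] := HW _ Wp.
exists ((h, pos e) :: nil); split; first by move=> he [<-|[]]; exact: cond_pos.
by move=> q Hq; apply/HV; apply: He; exact: (Hq (h, pos e) (or_introl erefl)).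
Qed.

End BSCTopology.

Section BSCSeparation.
Variables (X : Type) (OX : (X -> Prop) -> Prop) (HX : t_is_topology OX).
Variables (k : fieldType) (a : k -> R) (Ha : nonarch_abs a).
Local Notation B := (BSC OX a).
Local Notation TB := (BSC_open OX a).
Local Notation ind := (ind HX Ha).

Lemma clopen_preimage (h : Cbd OX a) V :
  clopen (k_open a) V -> clopen OX (fun x => V (proj1_sig h x)).
Proof.
by case=> h1 h2; have cf := proj1 (proj2_sig h); split; [exact: (cf _ h1)|exact: (cf _ h2)].
Qed.

Lemma charges_lt (p : B) h s (hs : 0 < s) : proj1_sig p h < s ->
  proj1_sig p (ind (clopen_preimage h (k_clopen_lt Ha hs))) = 1.
Proof.
move=> hlt; set HD := clopen_preimage _ _.
case: (ind_value01 HX Ha p HD) => // e0; exfalso.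
have e1 : proj1_sig p (ind (clopenC HD)) = 1 by rewrite (ind_compl HX Ha) e0; lra.
have := value_ge_on_full hs (fun x hx => Rnot_lt_le _ _ hx) e1; lra.
Qed.

Lemma charges_gt (p : B) h s (hs : s < 0 \/ 0 < s) : s < proj1_sig p h ->
  proj1_sig p (ind (clopen_preimage h (k_clopen_gt Ha hs))) = 1.
Proof.
move=> hlt; set HD := clopen_preimage _ _.
case: hs HD => hs HD.
- by apply: (ind_full HX Ha) => x; have := abs_ge0 Ha (proj1_sig h x); lra.
- case: (ind_value01 HX Ha p HD) => // e0; exfalso.
  have := value_le_off_null e0 (Rlt_le _ _ hs) (fun x hx => Rnot_lt_le _ _ hx); lra.
Qed.

Lemma separating_indicator (p q : B) : p <> q ->
  exists D (HD : clopen OX D), proj1_sig p (ind HD) = 1 /\ proj1_sig q (ind HD) = 0.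
Proof.
have lt_sep : forall (p q : B) h, proj1_sig p h < proj1_sig q h ->
    exists D (HD : clopen OX D), proj1_sig p (ind HD) = 1 /\ proj1_sig q (ind HD) = 0.
  move=> {}p {}q h hlt; have p0 := nu_ge0 p h.
  pose s := (proj1_sig p h + proj1_sig q h) / 2.
  have hs : 0 < s by rewrite /s; lra.
  have hs' : s < 0 \/ 0 < s by right.
  set HD := clopen_preimage h (k_clopen_lt Ha hs).
  exists _, HD; split; first by apply: charges_lt; rewrite /s; lra.
  set HE := clopen_preimage h (k_clopen_gt Ha hs').
  have e1 : proj1_sig q (ind HE) = 1 by apply: charges_gt; rewrite /s; lra.
  have e0 : proj1_sig q (ind (clopen_and HX HD HE)) = 0.
    by apply: (ind_empty HX Ha) => x /= [h1 h2]; lra.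
  by rewrite (ind_and HX Ha) e1 in e0; lra.
move=> npq.
have [h hh] : exists h, proj1_sig p h <> proj1_sig q h.
  apply: NNPP => H; apply: npq; apply: BSC_eq => h.
  by apply: NNPP => H'; apply: H; exists h.
case: (Rlt_le_dec (proj1_sig p h) (proj1_sig q h)) => hl; first exact: (lt_sep _ _ h).
have [D [HD [e1 e0]]] := lt_sep q p h ltac:(lra).
by exists _, (clopenC HD); rewrite !(ind_compl HX Ha) e1 e0; split; lra.
Qed.

Lemma indicator_halves D (HD : clopen OX D) :
  TB (fun r : B => proj1_sig r (ind HD) < 1 / 2) /\
  TB (fun r : B => 1 / 2 < proj1_sig r (ind HD)) /\
  (forall r : B, proj1_sig r (ind HD) < 1 / 2 \/ 1 / 2 < proj1_sig r (ind HD)).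
Proof.
split; first exact: (BSC_open_eval (ind HD) (@real_open_lt (1 / 2))).
split; first exact: (BSC_open_eval (ind HD) (@real_open_gt (1 / 2))).
by move=> r; case: (ind_value01 HX Ha r HD) => ->; [left|right]; lra.
Qed.

(* The two halves separate p and q. *)
Lemma BSC_hausdorff : t_hausdorff TB.
Proof.
move=> p q npq; have [D [HD [e1 e0]]] := separating_indicator npq.
have [Olt [Ogt _]] := indicator_halves HD.
eexists; eexists; split; first exact Ogt. split; first exact Olt.
by rewrite e1 e0; split; [lra|split; [lra|move=> z [h1 h2]; lra]].
Qed.

(* A set containing p and q is split by the two halves, hence disconnected. *)
Lemma BSC_totally_disconnected : t_totally_disconnected TB.
Proof.
move=> S HS p q Sp Sq; apply: NNPP => npq.
have [D [HD [e1 e0]]] := separating_indicator npq.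
have [Olt [Ogt cov]] := indicator_halves HD.
apply: HS; eexists; eexists; split; first exact Ogt. split; first exact Olt.
split; first by move=> r _; case: (cov r); [right|left].
split; first by exists p; split => //; lra.
split; first by exists q; split => //; lra.
by move=> r _ h1 h2; lra.
Qed.

(* iota is continuous: the preimage of a subbasic set is {x | |h x| \in W}. *)
Lemma iota_continuous : t_continuous OX TB (iota OX a Ha).
Proof.
move=> V HV; apply: (HV (fun V => OX (fun x => V (iota OX a Ha x)))).
- split; [|split].
  + exact: (open_T HX).
  + by move=> U W HU HW; exact: (open_and HX HU HW).
  + move=> F HF.
    pose F' W := exists U, F U /\ forall x, W x <-> U (iota OX a Ha x).
    apply: (open_ext (open_union HX (F := F') _)).
    * by move=> W [U [FU HW]]; apply: (open_ext (HF U FU)) => x; rewrite HW.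
    * move=> x; split; first by case=> W [[U [FU HW]] Wx]; exists U; split => //; apply/HW.
      by case=> U [FU Ux]; exists (fun x => U (iota OX a Ha x)); split => //; exists U.
- move=> W [h [Wr [HWr HW]]].
  apply: (open_ext ((proj1 (proj2_sig h)) _ (k_open_abs_preimage Ha HWr))) => x.
  by rewrite HW.
Qed.

Lemma charged_band (p : B) h e : 0 < e ->
  exists D (HD : clopen OX D), proj1_sig p (ind HD) = 1 /\
    forall x, D x -> Rabs (a (proj1_sig h x) - proj1_sig p h) < e.
Proof.
move=> he; set t := proj1_sig p h; have t0 : 0 <= t := nu_ge0 p h.
have hbe : 0 < t + e / 2 by lra.
have [al [hal [alt hband]]] : exists al, (al < 0 \/ 0 < al) /\ al < t /\
    (forall u, 0 <= u -> al < u -> u < t + e / 2 -> Rabs (u - t) < e).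
  case: (Rlt_le_dec 0 t) => ht.
  - exists (Rmax (t - e) (t / 2)); have := Rmax_l (t - e) (t / 2).
    have := Rmax_r (t - e) (t / 2); rewrite /Rmax; case: Rle_dec => _ h1 h2.
    + by split; [right; lra|split; [lra|move=> u _ hu1 hu2; apply: Rabs_def1; lra]].
    + by split; [right; lra|split; [lra|move=> u _ hu1 hu2; apply: Rabs_def1; lra]].
  - exists (-1); split; first by left; lra.
    by split; [lra|move=> u u0 _ hu; apply: Rabs_def1; lra].
set HD := clopen_preimage h (k_clopen_lt Ha hbe).
set HE := clopen_preimage h (k_clopen_gt Ha hal).
exists _, (clopen_and HX HD HE); split.
- by rewrite (ind_and HX Ha) charges_lt ?charges_gt //; [lra|rewrite -/t; lra].
- by move=> x [h1 h2]; apply: hband => //; exact: abs_ge0.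
Qed.

Lemma charged_near (p : B) l : positive_radii l ->
  exists D (HD : clopen OX D), proj1_sig p (ind HD) = 1 /\
    forall x, D x -> near l p (iota OX a Ha x).
Proof.
elim: l => [|[h e] l IH] Hl.
- exists _, (clopen_const HX True); split; first exact: (ind_full HX Ha).
  by move=> x _ he [].
- have [D [HD [e1 H1]]] := IH (fun he hin => Hl he (or_intror hin)).
  have [E [HE [e2 H2]]] := charged_band p h (Hl (h, e) (or_introl erefl)).
  exists _, (clopen_and HX HD HE); split; first by rewrite (ind_and HX Ha) e1 e2; lra.
  by move=> x [Dx Ex] he [<-|hin]; [exact: H2|exact: H1].
Qed.

(* Each basic neighbourhood of p contains iota x for x in a charged clopen set. *)
Lemma iota_dense : t_dense TB (fun p => exists x, p = iota OX a Ha x).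
Proof.
move=> U HU [p Up]; have [l [Hl Kl]] := BSC_open_basic HU Up.
have [D [HD [e1 H1]]] := charged_near p Hl.
have [x Dx] : exists x, D x.
  apply: NNPP => H; rewrite (ind_empty HX Ha p HD) in e1; first lra.
  by move=> x Dx; apply: H; exists x.
by exists (iota OX a Ha x); split; [apply: Kl; exact: H1|exists x].
Qed.

End BSCSeparation.

Section Compactness.
Variables (X : Type) (OX : (X -> Prop) -> Prop) (k : fieldType) (a : k -> R).
Local Notation B := (BSC OX a).
Local Notation TB := (BSC_open OX a).

Section UltrafilterLimitPoint.
Variables (G : (B -> Prop) -> Prop) (HG : ultrafilter G).

Lemma eval_bounded h : exists M, forall q : B, 0 <= proj1_sig q h <= M.
Proof. by have [C HC] := cbd_bounded h; exists C => q; split; [exact: nu_ge0|exact: nu_bound]. Qed.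

Definition uf_value (h : Cbd OX a) : R :=
  proj1_sig (constructive_indefinite_description _ (uf_limit_exists HG (eval_bounded h))).

Lemma uf_value_converges h : uf_converges G (fun q : B => proj1_sig q h) (uf_value h).
Proof. exact: (proj2_sig (constructive_indefinite_description _ _)). Qed.

Lemma uf_value_seminorm : bounded_mult_seminorm OX a uf_value.
Proof.
have conv := uf_value_converges.
split; [|split; [|split; [|split]]].
- move=> h; apply: (uf_limit_le HG (uf_converges_const HG 0) (conv h)) => q.
  exact: nu_ge0.
- move=> f g h E; apply: (uf_limit_le HG (conv h) (uf_converges_plus HG (conv f) (conv g))).
  by move=> q; exact: nu_add.
- move=> f g h E; apply: (uf_limit_unique HG (conv h)).
  have -> : (fun q : B => proj1_sig q h) = (fun q => proj1_sig q f * proj1_sig q g).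
    by apply: functional_extensionality => q; exact: nu_mul.
  exact: (uf_converges_mult HG (conv f) (conv g)).
- move=> c h E; apply: (uf_limit_unique HG (conv h)).
  have -> : (fun q : B => proj1_sig q h) = (fun _ => a c).
    by apply: functional_extensionality => q; exact: nu_const.
  exact: uf_converges_const.
- move=> h C HC; apply: (uf_limit_le HG (conv h) (uf_converges_const HG C)) => q.
  exact: nu_bound.
Qed.

Definition uf_limit_point : B := exist _ uf_value uf_value_seminorm.

Lemma uf_limit_point_nbhd U : TB U -> U uf_limit_point -> G U.
Proof.
move=> HU Up; have [l [Hl Kl]] := BSC_open_basic HU Up.
suff GN : G (near l uf_limit_point) by exact: (uf_mono HG Kl GN).
clear Kl; elim: l Hl => [|[h e] l IH] Hl.
  by apply: (uf_mono HG _ (uf_T HG)) => q _ he [].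
have Ge := uf_value_converges h (Hl (h, e) (or_introl erefl)).
apply: (uf_mono HG _ (uf_and HG (IH (fun he hin => Hl he (or_intror hin))) Ge)).
by move=> q [h1 h2] he [<-|hin]; [exact: h2|exact: h1].
Qed.

End UltrafilterLimitPoint.

(* An open cover without finite subcover yields a proper filter; an ultrafilter
   extending it converges to a point of some member U, yet contains the
   complement of U. *)
Lemma BSC_compact : t_compact TB.
Proof.
move=> F HF Hcov; apply: NNPP => Hno.
(* Sets containing the complement of a finite union of members of F form a
   proper filter, since F has no finite subcover. *)
pose Phi (A : B -> Prop) := exists l : list (B -> Prop),
  (forall U, In U l -> F U) /\ forall q, (forall U, In U l -> ~ U q) -> A q.
have PT : Phi (fun _ => True) by exists nil.
have PI : forall A A', Phi A -> Phi A' -> Phi (fun q => A q /\ A' q).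
  move=> A A' [l [H K]] [l' [H' K']]; exists (l ++ l'); split.
  - by move=> U hin; case: (in_app_or _ _ _ hin) => h; [exact: H|exact: H'].
  - by move=> q Hq; split; [apply: K|apply: K'] => U hin; apply: Hq; apply: in_or_app; tauto.
have PS : forall A A' : B -> Prop, (forall q, A q -> A' q) -> Phi A -> Phi A'.
  by move=> A A' sub [l [H K]]; exists l; split => // q Hq; apply: sub; exact: K.
have P0 : ~ Phi (fun _ => False).
  move=> [l [H K]]; apply: Hno; exists l; split => // q; apply: NNPP => nq.
  by apply: (K q) => U hin Uq; apply: nq; exists U.
have [G [HG FG]] := ultrafilter_extension PT PI PS P0.
have [U [FU Up]] := Hcov (uf_limit_point HG).
have GU := uf_limit_point_nbhd (HF U FU) Up.
have GnU : G (fun q => ~ U q).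
  by apply: FG; exists (U :: nil); split; [move=> U' [<-|[]]|move=> q Hq; apply: Hq; left].
by have [q [Uq nUq]] := uf_nonempty HG (uf_and HG GU GnU).
Qed.

End Compactness.

Section UniversalProperty.
Variables (X : Type) (OX : (X -> Prop) -> Prop) (HX : t_is_topology OX).
Variables (k : fieldType) (a : k -> R) (Ha : nonarch_abs a).
Variables (Y : Type) (OY : (Y -> Prop) -> Prop) (HY : t_is_topology OY)
  (HYc : t_compact OY) (HYh : t_hausdorff OY) (HYt : t_totally_disconnected OY)
  (f : X -> Y) (hf : t_continuous OX OY f).
Local Notation B := (BSC OX a).
Local Notation TB := (BSC_open OX a).
Local Notation ind := (ind HX Ha).

Lemma clopen_preimage_map V : clopen OY V -> clopen OX (fun x => V (f x)).
Proof. by case=> h1 h2; split; [exact: (hf h1)|exact: (hf h2)]. Qed.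

Definition charges (p : B) (V : Y -> Prop) : Prop :=
  exists HV : clopen OY V, proj1_sig p (ind (clopen_preimage_map HV)) = 1.

(* The charged clopen sets form an ultrafilter on the clopen algebra of Y. *)
Lemma charges_T p : charges p (fun _ => True).
Proof. by exists (clopen_const HY True); apply: (ind_full HX Ha). Qed.

Lemma charges_and p V W : charges p V -> charges p W -> charges p (fun y => V y /\ W y).
Proof.
case=> HV e1 [HW e2]; exists (clopen_and HY HV HW).
rewrite (ind_proof_irrelevance HX Ha p _
  (clopen_and HX (clopen_preimage_map HV) (clopen_preimage_map HW))).
by rewrite (ind_and HX Ha) e1 e2; lra.
Qed.

Lemma charges_choice p V : clopen OY V -> charges p V \/ charges p (fun y => ~ V y).
Proof.
move=> HV; case: (ind_value01 HX Ha p (clopen_preimage_map HV)) => e.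
- right; exists (clopenC HV).
  rewrite (ind_proof_irrelevance HX Ha p _ (clopenC (clopen_preimage_map HV))).
  by rewrite (ind_compl HX Ha) e; lra.
- by left; exists HV.
Qed.

(* Charged sets are nonempty, because charged preimages are. *)
Lemma charges_nonempty p V : charges p V -> exists y, V y.
Proof.
case=> HV e; apply: NNPP => H; rewrite (ind_empty HX Ha) in e; first lra.
by move=> x Vfx; apply: H; exists (f x).
Qed.

Definition fiber (p : B) (y : Y) : Prop := forall V, charges p V -> V y.

(* By compactness, an open set containing the fiber contains a charged clopen. *)
Lemma charged_inside_open p W : OY W -> (forall y, fiber p y -> W y) ->
  exists C, charges p C /\ forall y, C y -> W y.
Proof.
move=> OW HW; apply: (compact_closed_family HYc) => //.
- by move=> V [HV _]; exact: (proj2 HV).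
- exact: charges_T.
- exact: charges_and.
Qed.

(* The fiber is nonempty: otherwise the empty set would contain a charged set. *)
Lemma fiber_nonempty p : exists y, fiber p y.
Proof.
apply: NNPP => H.
have [C [PC HC]] := charged_inside_open (open_empty HY) (fun y Ky => H (ex_intro _ y Ky)).
by have [y Cy] := charges_nonempty PC; exact: HC y Cy.
Qed.

(* The fiber is an intersection of clopen sets, hence closed. *)
Lemma fiber_closed p : OY (fun y => ~ fiber p y).
Proof.
apply: (open_local HY) => y nK.
have [V [[HV e] nVy]] : exists V, charges p V /\ ~ V y.
  by apply: NNPP => H; apply: nK => V PV; apply: NNPP => nV; apply: H; exists V.
exists (fun z => ~ V z); split; first exact: (proj2 HV).
by split => // z nVz Kz; apply: nVz; apply: Kz; exists HV.
Qed.

(* The fiber is connected: a splitting of it into two relatively open pieces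
   would, by normality of Y, be cut by a charged clopen set. *)
Lemma fiber_connected p : t_connected_subset OY (fiber p).
Proof.
move=> [U [V [OU [OV [cov [[y1 [K1 U1]] [[y2 [K2 V2]] disj]]]]]]].
have closedA : OY (fun y => ~ (fiber p y /\ ~ V y)).
  apply: (open_ext (open_or HY (fiber_closed p) OV)) => y; split; first tauto.
  by move=> h; case: (classic (V y)); tauto.
have closedB : OY (fun y => ~ (fiber p y /\ ~ U y)).
  apply: (open_ext (open_or HY (fiber_closed p) OU)) => y; split; first tauto.
  by move=> h; case: (classic (U y)); tauto.
have disjAB : forall y, ~ ((fiber p y /\ ~ V y) /\ (fiber p y /\ ~ U y)).
  by move=> y [[Ky nV] [_ nU]]; case: (cov y Ky); tauto.
have [U' [V' [OU' [OV' [AU' [BV' D']]]]]] :=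
  compact_hausdorff_normal HY HYc HYh closedA closedB disjAB.
have inU' : forall y, fiber p y -> U y -> U' y.
  by move=> y Ky Uy; apply: AU'; split => // Vy; exact: (disj y Ky Uy Vy).
have inV' : forall y, fiber p y -> V y -> V' y.
  by move=> y Ky Vy; apply: BV'; split => // Uy; exact: (disj y Ky Uy Vy).
have [C [PC HC]] : exists C, charges p C /\ forall y, C y -> U' y \/ V' y.
  apply: charged_inside_open; first exact: open_or.
  by move=> y Ky; case: (cov y Ky) => h; [left; exact: inU'|right; exact: inV'].
have HCU : clopen OY (fun y => C y /\ U' y).
  have [OC OnC] : clopen OY C by case: PC.
  split; first exact: (open_and HY OC OU').
  apply: (open_ext (open_or HY OnC OV')) => y; split.
  - by case=> [nC|V'y]; [tauto|move=> [_ U'y]; exact: (D' y)].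
  - move=> h; case: (classic (C y)) => Cy; [right|by left].
    by case: (HC y Cy) => // U'y; exfalso; tauto.
case: (charges_choice p HCU) => PD.
- have [_ U'y2] := K2 _ PD; exact: (D' y2 (conj U'y2 (inV' y2 K2 V2))).
- by have [_ nCU] := K1 _ (charges_and PC PD); apply: nCU; split; [exact: (K1 _ PC)|exact: inU'].
Qed.

Lemma fiber_unique p y z : fiber p y -> fiber p z -> y = z.
Proof. exact: (HYt (fiber_connected (p := p))). Qed.

Definition extension (p : B) : Y :=
  proj1_sig (constructive_indefinite_description _ (fiber_nonempty p)).

Lemma extension_fiber p : fiber p (extension p).
Proof. exact: (proj2_sig (constructive_indefinite_description _ (fiber_nonempty p))). Qed.

(* A point iota x charges exactly the clopen sets containing f x. *)
Lemma extension_iota x : extension (iota OX a Ha x) = f x.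
Proof.
have Kfx : fiber (iota OX a Ha x) (f x).
  move=> V [HV e]; apply: NNPP => nV.
  by rewrite /= piece_out // (abs0 Ha) in e; lra.
exact: (fiber_unique (extension_fiber (p := iota OX a Ha x)) Kfx).
Qed.

(* The preimage of an open W around g p contains the open set of points
   charging a clopen C inside W. *)
Lemma extension_continuous : t_continuous TB OY extension.
Proof.
move=> W OW; apply: (open_local (BSC_topology OX a)) => p Wp.
have [C [[HC e] CW]] : exists C, charges p C /\ forall y, C y -> W y.
  apply: charged_inside_open => // y Ky.
  by rewrite -(fiber_unique (extension_fiber (p := p)) Ky).
have [_ [Ogt _]] := indicator_halves HX Ha (clopen_preimage_map HC).
eexists; split; first exact Ogt.
split; first by rewrite e; lra.
move=> q hq; apply: CW; apply: extension_fiber; exists HC.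
by case: (ind_value01 HX Ha q (clopen_preimage_map HC)) => // e0; rewrite e0 in hq; lra.
Qed.

(* Continuous maps into a Hausdorff space agreeing on the dense set iota X agree. *)
Lemma extension_unique (g : B -> Y) : t_continuous TB OY g ->
  (forall x, f x = g (iota OX a Ha x)) -> forall p, g p = extension p.
Proof.
move=> cg Hg p; apply: NNPP => ne; have [U [V [OU [OV [Up [Vp D]]]]]] := HYh ne.
have ON : TB (fun q => U (g q) /\ V (extension q)).
  exact: (open_and (BSC_topology OX a) (cg U OU) (extension_continuous OV)).
have [q [[Uq Vq] [x ex]]] := iota_dense HX Ha ON (ex_intro _ p (conj Up Vp)).
by subst q; rewrite extension_iota -Hg in Uq Vq; exact: (D (f x)).
Qed.

End UniversalProperty.

Definition tdc_universal (X B : Type) (OX : (X -> Prop) -> Prop)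
  (OB : (B -> Prop) -> Prop) (i : X -> B) : Prop :=
  forall (Y : Type) (OY : (Y -> Prop) -> Prop),
    t_is_topology OY -> t_compact OY -> t_hausdorff OY -> t_totally_disconnected OY ->
    forall f : X -> Y, t_continuous OX OY f ->
      exists g : B -> Y,
        t_continuous OB OY g /\ (forall x, f x = g (i x)) /\
        (forall g' : B -> Y, t_continuous OB OY g' ->
           (forall x, f x = g' (i x)) -> forall p, g' p = g p).

Lemma BSC_universal (X : Type) (OX : (X -> Prop) -> Prop) (HX : t_is_topology OX)
  (k : fieldType) (a : k -> R) (Ha : nonarch_abs a) :
  tdc_universal OX (BSC_open OX a) (iota OX a Ha).
Proof.
move=> Y OY HY HYc HYh HYt f hf; eexists.
split; first exact: (extension_continuous HX Ha HY HYc HYh HYt hf).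
split; last exact: extension_unique.
by move=> x; rewrite extension_iota.
Qed.

Definition tdc_space (B : Type) (OB : (B -> Prop) -> Prop) : Prop :=
  t_is_topology OB /\ t_compact OB /\ t_hausdorff OB /\ t_totally_disconnected OB.

Lemma tdc_universal_unique (X B1 B2 : Type) (OX : (X -> Prop) -> Prop)
  (O1 : (B1 -> Prop) -> Prop) (O2 : (B2 -> Prop) -> Prop) (i1 : X -> B1) (i2 : X -> B2) :
  tdc_space O1 -> tdc_space O2 -> t_continuous OX O1 i1 -> t_continuous OX O2 i2 ->
  tdc_universal OX O1 i1 -> tdc_universal OX O2 i2 ->
  exists h : B1 -> B2, t_homeomorphism O1 O2 h /\ forall x, h (i1 x) = i2 x.
Proof.
move=> S1 S2 c1 c2 U1 U2; have [T1 [C1 [H1 D1]]] := S1; have [T2 [C2 [H2 D2]]] := S2.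
have [h [hc [hi _]]] := U1 _ _ T2 C2 H2 D2 _ c2.
have [h' [hc' [hi' _]]] := U2 _ _ T1 C1 H1 D1 _ c1.
(* The only self-map of B_j over X is the identity. *)
have self_id : forall (B : Type) (O : (B -> Prop) -> Prop) (i : X -> B),
    tdc_space O -> t_continuous OX O i -> tdc_universal OX O i ->
    forall g, t_continuous O O g -> (forall x, i x = g (i x)) -> forall p, g p = p.
  move=> B O i [T [C [H D]]] ci Ui g cg gi p.
  have [g0 [_ [_ uniq]]] := Ui _ _ T C H D _ ci.
  have e := uniq (fun q => q) (fun V HV => HV) (fun x => erefl) p.
  by rewrite (uniq g cg gi) -e.
exists h; split; last by move=> x; rewrite -hi.
exists h'; split; first exact: hc. split; first exact: hc'. split.
- apply: (self_id B1 O1 i1 S1 c1 U1); first by move=> V HV; exact: (hc _ (hc' _ HV)).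
  by move=> x; rewrite -hi -hi'.
- apply: (self_id B2 O2 i2 S2 c2 U2); first by move=> V HV; exact: (hc' _ (hc _ HV)).
  by move=> x; rewrite -hi' -hi.
Qed.

Theorem mainTheorem2 (X : Type) (OX : (X -> Prop) -> Prop) (HX : t_is_topology OX)
  (k : fieldType) (a : k -> R) (Hk : complete_nonarch_field a) :
  let Ha := proj1 Hk in
  t_is_topology (BSC_open OX a) /\
  t_compact (BSC_open OX a) /\
  t_hausdorff (BSC_open OX a) /\
  t_totally_disconnected (BSC_open OX a) /\
  t_continuous OX (BSC_open OX a) (iota OX a Ha) /\
  t_dense (BSC_open OX a) (fun p => exists x, p = iota OX a Ha x) /\
  (forall (Y : Type) (OY : (Y -> Prop) -> Prop),
     t_is_topology OY -> t_compact OY -> t_hausdorff OY -> t_totally_disconnected OY ->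
     forall f : X -> Y, t_continuous OX OY f ->
       exists g : BSC OX a -> Y,
         t_continuous (BSC_open OX a) OY g /\ (forall x, f x = g (iota OX a Ha x)) /\
         (forall g' : BSC OX a -> Y, t_continuous (BSC_open OX a) OY g' ->
            (forall x, f x = g' (iota OX a Ha x)) -> forall p, g' p = g p)) /\
  (forall (k' : fieldType) (a' : k' -> R) (Hk' : complete_nonarch_field a'),
     exists h : BSC OX a -> BSC OX a',
       t_homeomorphism (BSC_open OX a) (BSC_open OX a') h /\
       forall x, h (iota OX a Ha x) = iota OX a' (proj1 Hk') x).
Proof.
move=> Ha.
have tdc : forall (k' : fieldType) (a' : k' -> R), nonarch_abs a' -> tdc_space (BSC_open OX a').
  move=> k' a' Ha'; split; first exact: BSC_topology.
  split; first exact: BSC_compact.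
  by split; [exact: (BSC_hausdorff HX Ha')|exact: (BSC_totally_disconnected HX Ha')].
have [T [C [H D]]] := tdc _ _ Ha.
split; first exact: T. split; first exact: C. split; first exact: H. split; first exact: D.
split; first exact: (iota_continuous HX Ha).
split; first exact: (iota_dense HX Ha).
split; first exact: (BSC_universal HX Ha).
move=> k' a' Hk'; set Ha' := proj1 Hk'.
exact: (tdc_universal_unique (tdc _ _ Ha) (tdc _ _ Ha') (iota_continuous HX Ha)
  (iota_continuous HX Ha') (BSC_universal HX Ha) (BSC_universal HX Ha')).
Qed.
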